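(* Consider equation (E). Assume there exist continuous non-decreasing functions $\sigma_1,\dots,\sigma_m:[t_0,\infty)\to\mathbb{R}$ such that $\tau_i(t)\le\sigma_i(t)\le t$ for all $t\ge t_0$ and $i=1,\dots,m$. For $t\ge t_0$ and $i,j\in\{1,\dots,m\}$ put $$I_{ij}(t)=\int_{\sigma_j(t)}^{t}p_i(s)\exp\Bigg(\int_{\tau_i(s)}^{\sigma_i(t)}\sum_{k=1}^{m}p_k(\xi)\exp\bigg(\int_{\tau_k(\xi)}^{\xi}\sum_{l=1}^{m}p_l(u)\,du\bigg)d\xi\Bigg)ds .$$ If $$\limsup_{t\to+\infty}\prod_{j=1}^{m}\Bigg[\prod_{i=1}^{m}I_{ij}(t)\Bigg]^{1/m}>\frac{1}{m^{m}},$$ then all solutions of (E) oscillate.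
   Context: Equation (E) is $x'(t)+\sum_{i=1}^{m}p_i(t)\,x(\tau_i(t))=0$, $t\ge t_0$, where $m\ge1$ is an integer and, for each $i$, $p_i,\tau_i:[t_0,\infty)\to[0,\infty)$ are continuous, $\tau_i(t)\le t$ for $t\ge t_0$, and $\lim_{t\to\infty}\tau_i(t)=\infty$. Let $\tau(t)=\min_i\tau_i(t)$ and $\tau_{(-1)}(t)=\sup\{s:\tau(s)\le t\}$. A solution of (E) is a function $x\in C([T_0,\infty);\mathbb{R})$ for some $T_0\ge t_0$ which is continuously differentiable on $[\tau_{(-1)}(T_0),\infty)$ and satisfies (E) for $t\ge\tau_{(-1)}(T_0)$. A solution is oscillatory if it has arbitrarily large zeros, and nonoscillatory otherwise; ''all solutions oscillate'' means every solution is oscillatory. *)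

From Stdlib Require Import Reals Lra Classical ClassicalEpsilon.
Open Scope R_scope.

(* If f is not Riemann integrable on the interval, the value is
   an arbitrary default 0 (this never happens in the relevant range: the
   integrands are continuous there).  RiemannInt is independent of the
   integrability proof (RiemannInt_P5). *)
Definition Rint (f : R -> R) (a b : R) : R :=
  match excluded_middle_informative (exists _ : Riemann_integrable f a b, True) with
  | left H => RiemannInt (proj1_sig (constructive_indefinite_description _ H))
  | right _ => 0
  end.

Fixpoint sumR (n : nat) (f : nat -> R) : R :=
  match n with O => 0 | S k => sumR k f + f k end.
Fixpoint prodR (n : nat) (f : nat -> R) : R :=
  match n with O => 1 | S k => prodR k f * f k end.

Fixpoint minR (n : nat) (f : nat -> R) : R :=
  match n with O => f O | S k => Rmin (minR k f) (f (S k)) end.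

Definition rootR (m : nat) (x : R) : R :=
  if Rle_dec x 0 then 0 else Rpower x (/ INR m).

Definition cont_from (a : R) (f : R -> R) : Prop :=
  forall t, a <= t -> forall eps, 0 < eps -> exists delta, 0 < delta /\
    forall s, a <= s -> Rabs (s - t) < delta -> Rabs (f s - f t) < eps.

Definition deriv_from (a : R) (f : R -> R) (t l : R) : Prop :=
  forall eps, 0 < eps -> exists delta, 0 < delta /\
    forall h, h <> 0 -> Rabs h < delta -> a <= t + h ->
      Rabs ((f (t + h) - f t) / h - l) < eps.

Definition nondecr_from (a : R) (f : R -> R) : Prop :=
  forall s t, a <= s -> s <= t -> f s <= f t.

Definition tends_to_infty (f : R -> R) : Prop :=
  forall M, exists T, forall t, T <= t -> M <= f t.

(* limsup_{t -> +oo} f t > c   (limsup taken in the extended reals) *)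
Definition limsup_gt (f : R -> R) (c : R) : Prop :=
  exists d, c < d /\ forall T, exists t, T <= t /\ d <= f t.

Definition tau_min (m : nat) (tau : nat -> R -> R) (t : R) : R :=
  minR (pred m) (fun i => tau i t).

(* x is a solution of (E) on [T0, +oo):  x continuous on [T0,oo),
   continuously differentiable on [tau_(-1)(T0), oo) where
   tau_(-1)(T0) = sup { s >= t0 : tau(s) <= T0 }, and satisfies (E) there. *)
Definition is_solution (t0 : R) (m : nat) (p tau : nat -> R -> R)
    (x : R -> R) : Prop :=
  exists T0 T1, t0 <= T0 /\
    is_lub (fun s => t0 <= s /\ tau_min m tau s <= T0) T1 /\
    cont_from T0 x /\
    exists x' : R -> R, cont_from T1 x' /\
      forall t, T1 <= t ->
        deriv_from T1 x t (x' t) /\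
        x' t + sumR m (fun i => p i t * x (tau i t)) = 0.

Definition oscillatory (x : R -> R) : Prop :=
  forall T, exists t, T <= t /\ x t = 0.

Definition I_ij (m : nat) (p tau sigma : nat -> R -> R) (i j : nat) (t : R) : R :=
  Rint (fun s =>
    p i s * exp (Rint (fun xi =>
      sumR m (fun k => p k xi *
        exp (Rint (fun u => sumR m (fun l => p l u)) (tau k xi) xi)))
      (tau i s) (sigma i t)))
    (sigma j t) t.

(* Suppose a solution x has no zeros beyond some point.  Being
   continuous it then keeps one sign, and since -x is again a solution we may
   assume x > 0 eventually.  Equation (E) then gives, on successively later
   half-lines where all delays have entered the positivity region:
   (1) x is nonincreasing, hence x(tau_k t) >= x(t);
   (2) sum_l p_l <= -x'/x, so exp (int_{tau_k xi}^{xi} sum_l p_l) <= x(tau_k xi)/x(xi);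
   (3) Q := sum_k p_k exp (int_{tau_k}^{.} sum_l p_l) <= -x'/x, so
       x(sigma_i t) exp (int_{tau_i s}^{sigma_i t} Q) <= x(tau_i s);
   (4) integrating (E) over [sigma_j t, t]:
       sum_i x(sigma_i t) I_ij(t) <= x(sigma_j t) - x(t) < x(sigma_j t).
   An AM-GM argument turns (4), valid for every j, into
   prod_j (prod_i I_ij(t))^(1/m) <= 1/m^m for all large t, contradicting the
   limsup hypothesis. *)

From Stdlib Require Import Reals Lra Lia Classical ClassicalEpsilon Ranalysis5.
From Coquelicot Require Import Coquelicot.
From mathcomp Require all_boot all_order all_algebra Rstruct.
Open Scope R_scope.

Module AMGM.
Import all_boot all_order all_algebra Rstruct.
Import Order.TTheory GRing.Theory Num.Theory.

Lemma sumR_big n (a : nat -> R) : sumR n a = (\sum_(i < n) a i)%R.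
Proof. elim: n => [|n IH]; first by rewrite big_ord0. by rewrite big_ord_recr /= IH. Qed.

Lemma prodR_big n (a : nat -> R) : prodR n a = (\prod_(i < n) a i)%R.
Proof. elim: n => [|n IH]; first by rewrite big_ord0. by rewrite big_ord_recr /= IH. Qed.

Lemma amgm (n : nat) (a : nat -> R) :
  (forall i, (i < n)%coq_nat -> 0 <= a i) ->
  INR n ^ n * prodR n a <= (sumR n a) ^ n.
Proof.
move=> a_ge0; rewrite sumR_big prodR_big !RpowE INRE.
have a_ge0' : {in predT, forall i : 'I_n, (0 <= a i *+ #|(predT : {pred 'I_n})|)%R}.
  by move=> i _; rewrite mulrn_wge0 //; apply/RleP; apply: a_ge0; apply/ssrnat.ltP.
have [agm _] := @leif_AGM_scaled _ 'I_n predT (fun i => a i) a_ge0'.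
move: agm; rewrite card_ord prodrMn_const card_ord -mulr_natl natrX => agm.
exact/RleP.
Qed.
End AMGM.

Lemma sumR_ext n a b : (forall i, (i < n)%nat -> a i = b i) -> sumR n a = sumR n b.
Proof. induction n; simpl; intros H. auto. rewrite IHn, H; auto; intros; apply H; lia. Qed.

Lemma sumR_le n a b : (forall i, (i < n)%nat -> a i <= b i) -> sumR n a <= sumR n b.
Proof.
  induction n; simpl; intros H. lra.
  apply Rplus_le_compat; [apply IHn; intros; apply H; lia | apply H; lia].
Qed.

Lemma sumR_nonneg n a : (forall i, (i < n)%nat -> 0 <= a i) -> 0 <= sumR n a.
Proof.
  intros H. apply Rle_trans with (sumR n (fun _ => 0)); [| now apply sumR_le].
  clear H; induction n; simpl; lra.
Qed.

Lemma sumR_mult_r n a c : sumR n (fun i => a i * c) = sumR n a * c.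
Proof. induction n; simpl. ring. rewrite IHn; ring. Qed.

Lemma sumR_opp n a : sumR n (fun i => - a i) = - sumR n a.
Proof. induction n; simpl. ring. rewrite IHn; ring. Qed.

Lemma prodR_ext n a b : (forall i, (i < n)%nat -> a i = b i) -> prodR n a = prodR n b.
Proof. induction n; simpl; intros H. auto. rewrite IHn, H; auto; intros; apply H; lia. Qed.

Lemma prodR_nonneg n a : (forall i, (i < n)%nat -> 0 <= a i) -> 0 <= prodR n a.
Proof.
  induction n; simpl; intros H. lra.
  apply Rmult_le_pos; [apply IHn; intros; apply H; lia | apply H; lia].
Qed.

Lemma prodR_pos n a : (forall i, (i < n)%nat -> 0 < a i) -> 0 < prodR n a.
Proof.
  induction n; simpl; intros H. lra.
  apply Rmult_lt_0_compat; [apply IHn; intros; apply H; lia | apply H; lia].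
Qed.

Lemma prodR_le n a b : (forall i, (i < n)%nat -> 0 <= a i <= b i) -> prodR n a <= prodR n b.
Proof.
  induction n; simpl; intros H. lra.
  apply Rmult_le_compat.
  - apply prodR_nonneg; intros; apply H; lia.
  - apply H; lia.
  - apply IHn; intros; apply H; lia.
  - apply H; lia.
Qed.

Lemma prodR_mult n a b : prodR n (fun i => a i * b i) = prodR n a * prodR n b.
Proof. induction n; simpl. ring. rewrite IHn; ring. Qed.

Lemma prodR_pow n a k : prodR n (fun i => a i ^ k) = (prodR n a) ^ k.
Proof. induction n; simpl. now rewrite pow1. rewrite IHn, Rpow_mult_distr; ring. Qed.

Lemma prodR_const n c : prodR n (fun _ => c) = c ^ n.
Proof. induction n; simpl. auto. rewrite IHn; ring. Qed.

Lemma rootR_pow m P : (1 <= m)%nat -> 0 <= P -> 0 <= rootR m P /\ rootR m P ^ m = P.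
Proof.
  intros Hm HP. unfold rootR. destruct (Rle_dec P 0).
  - split. lra. assert (P = 0) by lra. subst. apply pow_i; lia.
  - split. unfold Rpower. left; apply exp_pos.
    rewrite <- Rpower_pow by (unfold Rpower; apply exp_pos).
    rewrite Rpower_mult, Rinv_l by (apply not_0_INR; lia).
    apply Rpower_1; lra.
Qed.

Lemma pow_le_1_inv z m : (1 <= m)%nat -> 0 <= z -> z ^ m <= 1 -> z <= 1.
Proof.
  intros Hm Hz H. destruct (Rle_lt_dec z 1) as [h|h]; auto.
  assert (1 < z ^ m) by (destruct m; [lia | apply Rlt_pow_R1; auto; lia]). lra.
Qed.

(* By AM-GM each column gives
   m^m (prod_i Y_i) (prod_i I_ij) <= Y_j^m; multiplying over j and cancelling
   (prod Y)^m yields the bound. *)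
Lemma root_product_bound (m : nat) (Y : nat -> R) (I : nat -> nat -> R) :
  (1 <= m)%nat ->
  (forall i, (i < m)%nat -> 0 < Y i) ->
  (forall i j, (i < m)%nat -> (j < m)%nat -> 0 <= I i j) ->
  (forall j, (j < m)%nat -> sumR m (fun i => Y i * I i j) <= Y j) ->
  prodR m (fun j => rootR m (prodR m (fun i => I i j))) <= / (INR m ^ m).
Proof.
  intros Hm HY HI Hsub.
  set (PY := prodR m Y).
  set (col := fun j => prodR m (fun i => I i j)).
  assert (HPY : 0 < PY) by (apply prodR_pos; auto).
  assert (Hcol : forall j, (j < m)%nat -> 0 <= col j) by (intros; apply prodR_nonneg; auto).
  assert (Hmm : 0 < INR m ^ m) by (apply pow_lt, lt_0_INR; lia).
  assert (column_amgm : forall j, (j < m)%nat -> 0 <= INR m ^ m * PY * col j <= Y j ^ m).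
  { intros j Hj.
    assert (Hterm : forall i, (i < m)%nat -> 0 <= Y i * I i j)
      by (intros; apply Rmult_le_pos; [left; apply HY | apply HI]; auto).
    split. { apply Rmult_le_pos; [apply Rmult_le_pos|]; auto; lra. }
    apply Rle_trans with (sumR m (fun i => Y i * I i j) ^ m).
    - unfold PY, col. rewrite Rmult_assoc, <- prodR_mult. now apply AMGM.amgm.
    - apply pow_incr. split; [apply sumR_nonneg | apply Hsub]; auto. }
  assert (Hprod : prodR m (fun j => INR m ^ m * PY * col j) <= prodR m (fun j => Y j ^ m))
    by (apply prodR_le; auto).
  rewrite !prodR_mult, !prodR_const, prodR_pow, <- pow_mult in Hprod. fold PY in Hprod.
  set (r := prodR m (fun j => rootR m (col j))).
  assert (Hr : 0 <= r) by (apply prodR_nonneg; intros; apply rootR_pow; auto).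
  assert (Hrm : r ^ m = prodR m col).
  { unfold r. rewrite <- prodR_pow. apply prodR_ext. intros; apply rootR_pow; auto. }
  assert (H1 : (INR m ^ m * r) ^ m <= 1).
  { rewrite Rpow_mult_distr, Hrm, <- pow_mult.
    apply Rmult_le_reg_r with (PY ^ m); [apply pow_lt; auto|].
    rewrite Rmult_1_l. rewrite Rmult_comm, <- Rmult_assoc, (Rmult_comm (PY ^ m)). exact Hprod. }
  apply pow_le_1_inv in H1; auto; [|apply Rmult_le_pos; lra].
  change (r <= / (INR m ^ m)).
  apply Rmult_le_reg_l with (INR m ^ m); auto. rewrite Rinv_r; lra.
Qed.

Lemma exp_le_compat x y : x <= y -> exp x <= exp y.
Proof. intros [h|h]; [left; apply exp_increasing; auto | subst; lra]. Qed.

Lemma Rint_RInt f a b : ex_RInt f a b -> Rint f a b = RInt f a b.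
Proof.
  intros H. unfold Rint. case excluded_middle_informative; intros e.
  - symmetry; apply RInt_Reals.
  - exfalso; apply e. exists (ex_RInt_Reals_0 _ _ _ H); exact I.
Qed.

Lemma Rint_0 f a b : ~ ex_RInt f a b -> Rint f a b = 0.
Proof.
  intros H. unfold Rint. case excluded_middle_informative; intros e; auto.
  exfalso; apply H. destruct e as [pr _]. now apply ex_RInt_Reals_1.
Qed.

Lemma Rint_nonneg f a b : a <= b -> (forall x, a < x < b -> 0 <= f x) -> 0 <= Rint f a b.
Proof.
  intros Hab Hf. destruct (classic (ex_RInt f a b)) as [e|ne].
  - rewrite Rint_RInt by exact e. apply RInt_ge_0; auto.
  - rewrite Rint_0 by exact ne. lra.
Qed.

(* f itself if it is integrable on [a, b], the zero function otherwise: an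
   integrable function with the same [Rint], below f where f >= 0. *)
Definition integrable_part (f : R -> R) (a b : R) : R -> R :=
  fun x => if excluded_middle_informative (ex_RInt f a b) then f x else 0.

Lemma integrable_part_spec f a b :
  ex_RInt (integrable_part f a b) a b /\ Rint f a b = RInt (integrable_part f a b) a b.
Proof.
  unfold integrable_part. destruct (excluded_middle_informative (ex_RInt f a b)) as [e|ne].
  - split; [exact e | now apply Rint_RInt].
  - split; [apply (ex_RInt_const a b (0:R)) |].
    rewrite Rint_0, RInt_const by exact ne. unfold scal; simpl; unfold mult; simpl; ring.
Qed.

Lemma integrable_part_le f a b x : 0 <= f x -> integrable_part f a b x <= f x.
Proof. intros H. unfold integrable_part. destruct (excluded_middle_informative _); lra. Qed.

Lemma RInt_weighted_sum (n : nat) (c : nat -> R) (g : nat -> R -> R) a b :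
  (forall i, (i < n)%nat -> ex_RInt (g i) a b) ->
  ex_RInt (fun x => sumR n (fun i => c i * g i x)) a b /\
  RInt (fun x => sumR n (fun i => c i * g i x)) a b = sumR n (fun i => c i * RInt (g i) a b).
Proof.
  induction n as [|n IH]; intros Hg; simpl.
  - split; [apply (ex_RInt_const a b (0:R)) |].
    rewrite RInt_const. unfold scal; simpl; unfold mult; simpl; ring.
  - destruct IH as [IH1 IH2]; [intros; apply Hg; lia |].
    assert (Hn : ex_RInt (fun x => c n * g n x) a b)
      by (apply (ex_RInt_scal (g n) a b (c n)); apply Hg; lia).
    split; [apply (ex_RInt_plus _ _ a b IH1 Hn) |].
    etransitivity; [apply (RInt_plus _ _ a b IH1 Hn) |].
    rewrite IH2. apply f_equal, (RInt_scal (g n) a b (c n)). apply Hg; lia.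
Qed.

Lemma RInt_le_increment (g G H : R -> R) a b :
  a <= b ->
  (forall x, a <= x <= b -> is_derive G x (H x)) ->
  (forall x, a <= x <= b -> continuous H x) ->
  ex_RInt g a b -> (forall x, a < x < b -> g x <= H x) ->
  RInt g a b <= G b - G a.
Proof.
  intros Hab HG HH Hg Hle.
  assert (FTC : is_RInt H a b (minus (G b) (G a))).
  { apply (is_RInt_derive G H a b);
      intros x Hx; rewrite Rmin_left, Rmax_right in Hx by lra; auto. }
  replace (G b - G a) with (RInt H a b) by (apply is_RInt_unique; exact FTC).
  apply RInt_le; auto. exists (minus (G b) (G a)); exact FTC.
Qed.

Lemma weighted_Rint_le_increment (n : nat) (c : nat -> R) (f : nat -> R -> R) (G H : R -> R) a b :
  a <= b ->
  (forall x, a <= x <= b -> is_derive G x (H x)) ->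
  (forall x, a <= x <= b -> continuous H x) ->
  (forall i, (i < n)%nat -> 0 <= c i) ->
  (forall i, (i < n)%nat -> forall x, a < x < b -> 0 <= f i x) ->
  (forall x, a < x < b -> sumR n (fun i => c i * f i x) <= H x) ->
  sumR n (fun i => c i * Rint (f i) a b) <= G b - G a.
Proof.
  intros Hab HG HH Hc Hf Hsum.
  set (g := fun i => integrable_part (f i) a b).
  rewrite (sumR_ext n _ (fun i => c i * RInt (g i) a b))
    by (intros; f_equal; apply integrable_part_spec).
  destruct (RInt_weighted_sum n c g a b (fun i _ => proj1 (integrable_part_spec (f i) a b)))
    as [Hex Heq].
  rewrite <- Heq. apply RInt_le_increment with H; auto.
  intros x Hx. eapply Rle_trans; [|apply Hsum; exact Hx].
  apply sumR_le. intros i Hi. apply Rmult_le_compat_l; auto.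
  apply integrable_part_le, Hf; auto.
Qed.

Lemma Rint_le_increment (f G H : R -> R) a b :
  a <= b ->
  (forall x, a <= x <= b -> is_derive G x (H x)) ->
  (forall x, a <= x <= b -> continuous H x) ->
  (forall x, a < x < b -> 0 <= f x) ->
  (forall x, a < x < b -> f x <= H x) ->
  Rint f a b <= G b - G a.
Proof.
  intros Hab HG HH Hf Hle.
  pose proof (weighted_Rint_le_increment 1 (fun _ => 1) (fun _ => f) G H a b Hab HG HH)
    as K; simpl in K.
  enough (0 + 1 * Rint f a b <= G b - G a) by lra.
  apply K; intros; try lra; auto. rewrite Rplus_0_l, Rmult_1_l; auto.
Qed.

Lemma deriv_from_is_derive T1 y t l : T1 < t -> deriv_from T1 y t l -> is_derive y t l.
Proof.
  intros Ht H. apply is_derive_Reals. intros eps He. destruct (H eps He) as [d [Hd Hd']].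
  assert (Hp : 0 < Rmin d (t - T1)) by (apply Rmin_pos; lra).
  exists (mkposreal _ Hp). simpl. intros h Hh Hh'.
  assert (Rabs h < t - T1) by (eapply Rlt_le_trans; [exact Hh' | apply Rmin_r]).
  apply Hd'; auto.
  - eapply Rlt_le_trans; [exact Hh' | apply Rmin_l].
  - apply Rabs_def2 in H0. lra.
Qed.

Lemma cont_from_continuous T1 f t : T1 < t -> cont_from T1 f -> continuous f t.
Proof.
  intros Ht H. apply continuity_pt_filterlim.
  intros eps He. destruct (H t (Rlt_le _ _ Ht) eps He) as [d [Hd Hd']].
  exists (Rmin d (t - T1)). split; [apply Rmin_pos; lra |].
  intros x [_ Hx]. simpl in *. unfold R_dist in *.
  assert (Rabs (x - t) < d) by (eapply Rlt_le_trans; [exact Hx | apply Rmin_l]).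
  assert (Rabs (x - t) < t - T1) by (eapply Rlt_le_trans; [exact Hx | apply Rmin_r]).
  apply Hd'; auto. apply Rabs_def2 in H1. lra.
Qed.

Lemma positive_persists (f : R -> R) c :
  (forall a, c <= a -> continuity_pt f a) -> 0 < f c ->
  (forall t, c <= t -> f t <> 0) -> forall t, c <= t -> 0 < f t.
Proof.
  intros Hc Hfc Hn t Ht. destruct (Rlt_le_dec 0 (f t)) as [h|h]; auto. exfalso.
  assert (Hft : f t < 0) by (destruct h; auto; exfalso; apply (Hn t); auto).
  assert (Hct : c < t) by (destruct Ht as [Ht|Ht]; auto; subst; lra).
  destruct (IVT_interv (fun u => - f u) c t) as [z [Hz Hz']]; try lra.
  - intros a Ha. apply continuity_pt_opp, Hc; lra.
  - apply (Hn z); lra.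
Qed.

Lemma sign_dichotomy (f : R -> R) c :
  (forall a, c <= a -> continuity_pt f a) -> (forall t, c <= t -> f t <> 0) ->
  (forall t, c <= t -> 0 < f t) \/ (forall t, c <= t -> f t < 0).
Proof.
  intros Hc Hn. destruct (Rlt_le_dec 0 (f c)) as [Hpos|Hneg].
  - left. now apply positive_persists.
  - right. assert (f c <> 0) by (apply Hn; lra).
    intros t Ht. enough (0 < - f t) by lra.
    apply (positive_persists (fun u => - f u) c); auto; try lra.
    + intros a Ha. apply continuity_pt_opp, Hc; lra.
    + intros s Hs Hs'. apply (Hn s Hs). lra.
Qed.

Definition solves_on (m : nat) (p tau : nat -> R -> R) (B : R) (y : R -> R) : Prop :=
  exists y' : R -> R, forall u, B <= u ->
    is_derive y u (y' u) /\ continuous y' u /\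
    y' u + sumR m (fun i => p i u * y (tau i u)) = 0.

Lemma solves_on_later m p tau B B' y : B <= B' -> solves_on m p tau B y -> solves_on m p tau B' y.
Proof. intros HB [y' Hy]. exists y'. intros u Hu. apply Hy; lra. Qed.

Lemma solves_on_opp m p tau B y : solves_on m p tau B y -> solves_on m p tau B (fun u => - y u).
Proof.
  intros [y' Hy]. exists (fun u => - y' u). intros u Hu. destruct (Hy u Hu) as [Hd [Hc He]].
  split; [apply (is_derive_opp y u (y' u) Hd) |]. split; [apply (continuous_opp y' u Hc) |].
  rewrite (sumR_ext m _ (fun i => - (p i u * y (tau i u)))) by (intros; ring).
  rewrite sumR_opp. lra.
Qed.

Lemma solves_on_continuity_pt m p tau B y :
  solves_on m p tau B y -> forall a, B <= a -> continuity_pt y a.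
Proof.
  intros [y' Hy] a Ha. apply continuity_pt_filterlim.
  apply (@ex_derive_continuous R_AbsRing R_NormedModule y a). exists (y' a). apply Hy; auto.
Qed.

Lemma minR_le_first n f : minR n f <= f O.
Proof. induction n; simpl. lra. eapply Rle_trans; [apply Rmin_l | exact IHn]. Qed.

(* A solution in the sense of the statement is a classical solution on some
   half-line [B, +oo) with B >= t0: beyond tau_(-1)(T0) its derivative is
   two-sided, and tau_(-1)(T0) >= t0 because tau(t0) <= t0 <= T0. *)
Lemma solution_solves_on (t0 : R) (m : nat) (p tau : nat -> R -> R) (x : R -> R) :
  tau O t0 <= t0 -> is_solution t0 m p tau x -> exists B, t0 <= B /\ solves_on m p tau B x.
Proof.
  intros Htau [T0 [T1 [HT0 [Hlub [_ [x' [Hcx' Hx]]]]]]].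
  assert (Ht0 : t0 <= T1).
  { apply (proj1 Hlub). split; [lra |]. unfold tau_min.
    eapply Rle_trans; [apply minR_le_first | simpl; lra]. }
  exists (T1 + 1). split; [lra |]. exists x'. intros u Hu. destruct (Hx u ltac:(lra)) as [Hd He].
  split; [apply deriv_from_is_derive with T1; auto; lra |].
  split; [apply cont_from_continuous with T1; auto; lra | exact He].
Qed.

Definition delays_beyond (m : nat) (tau : nat -> R -> R) (M t : R) : Prop :=
  forall i, (i < m)%nat -> M <= tau i t.

Definition delay_threshold (m : nat) (tau : nat -> R -> R) (M A : R) : Prop :=
  M <= A /\ forall t, A <= t -> delays_beyond m tau M t.

Lemma delay_threshold_exists m (tau : nat -> R -> R) :
  (forall i, (i < m)%nat -> tends_to_infty (tau i)) -> forall M, exists A, delay_threshold m tau M A.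
Proof.
  induction m; intros H M.
  - exists M. split; [lra | intros t _ i Hi; lia].
  - destruct (IHm (fun i Hi => H i (Nat.lt_lt_succ_r _ _ Hi)) M) as [A [HA HA']].
    destruct (H m (Nat.lt_succ_diag_r m) M) as [C HC].
    exists (Rmax A C). split; [eapply Rle_trans; [exact HA | apply Rmax_l] |].
    intros t Ht i Hi. destruct (Nat.eq_dec i m) as [->|ne].
    + apply HC. eapply Rle_trans; [apply Rmax_r | exact Ht].
    + apply HA'; [eapply Rle_trans; [apply Rmax_l | exact Ht] | lia].
Qed.

(* The two weights appearing in I_ij: the total coefficient sum_l p_l and
   Q = sum_k p_k exp (int_{tau_k}^{.} sum_l p_l); by definition
   I_ij(t) = Rint (fun s => p_i s * exp (Rint Q (tau_i s) (sigma_i t))) (sigma_j t) t. *)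
Definition p_total (m : nat) (p : nat -> R -> R) (u : R) : R := sumR m (fun l => p l u).

Definition Q_weight (m : nat) (p tau : nat -> R -> R) (xi : R) : R :=
  sumR m (fun k => p k xi * exp (Rint (p_total m p) (tau k xi) xi)).

Section EventuallyPositiveSolution.

Variables (m : nat) (t0 B : R) (p tau sigma : nat -> R -> R) (y y' : R -> R).

Hypothesis p_nonneg : forall i t, (i < m)%nat -> t0 <= t -> 0 <= p i t.
Hypothesis tau_le : forall i t, (i < m)%nat -> t0 <= t -> tau i t <= t.
Hypothesis tau_le_sigma : forall i t, (i < m)%nat -> t0 <= t -> tau i t <= sigma i t.
Hypothesis sigma_le : forall i t, (i < m)%nat -> t0 <= t -> sigma i t <= t.
Hypothesis sigma_mono : forall i s t, (i < m)%nat -> t0 <= s -> s <= t -> sigma i s <= sigma i t.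

Hypothesis t0_le_B : t0 <= B.
Hypothesis y_deriv : forall u, B <= u -> is_derive y u (y' u).
Hypothesis y'_cont : forall u, B <= u -> continuous y' u.
Hypothesis y_eq : forall u, B <= u -> y' u = - sumR m (fun i => p i u * y (tau i u)).
Hypothesis y_pos : forall u, B <= u -> 0 < y u.

(* Successive half-lines [A_k, +oo) on which all delays lie in [A_(k-1), +oo). *)
Variables (A1 A2 A3 A4 A5 : R).
Hypothesis thr1 : delay_threshold m tau B A1.
Hypothesis thr2 : delay_threshold m tau A1 A2.
Hypothesis thr3 : delay_threshold m tau A2 A3.
Hypothesis thr4 : delay_threshold m tau A3 A4.
Hypothesis thr5 : delay_threshold m tau A4 A5.

Let y_cont u : B <= u -> continuous y u.
Proof.
  intros Hu. apply (@ex_derive_continuous R_AbsRing R_NormedModule y u).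
  exists (y' u). auto.
Qed.

(* Step (1): once the delays are in the positivity region, y' <= 0, so y is nonincreasing. *)
Lemma y_nonincreasing a b : A1 <= a -> a <= b -> y b <= y a.
Proof.
  intros Ha Hab. destruct thr1 as [HB1 Hd].
  assert (Hy'_nonpos : forall u, A1 <= u -> y' u <= 0).
  { intros u Hu. rewrite y_eq by lra.
    enough (0 <= sumR m (fun i => p i u * y (tau i u))) by lra.
    apply sumR_nonneg. intros i Hi. apply Rmult_le_pos; [apply p_nonneg; auto; lra |].
    left; apply y_pos, Hd; auto. }
  assert (Hint0 : 0 <= Rint (fun _ => 0) a b) by (apply Rint_nonneg; auto; intros; lra).
  enough (Rint (fun _ => 0) a b <= - y b - - y a) by lra.
  apply (Rint_le_increment _ (fun u => - y u) (fun u => - y' u)); auto; intros x Hx.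
  - apply (is_derive_opp y x (y' x)), y_deriv; lra.
  - apply (continuous_opp y' x), y'_cont; lra.
  - lra.
  - pose proof (Hy'_nonpos x ltac:(lra)). lra.
Qed.

Lemma exp_Rint_logderiv_le (g : R -> R) a b :
  B <= a -> a <= b ->
  (forall x, a < x < b -> 0 <= g x) ->
  (forall x, a < x < b -> g x <= - (y' x / y x)) ->
  exp (Rint g a b) * y b <= y a.
Proof.
  intros Ha Hab Hg0 Hg.
  assert (Hya : 0 < y a) by (apply y_pos; lra).
  assert (Hyb : 0 < y b) by (apply y_pos; lra).
  assert (Hint : Rint g a b <= - ln (y b) - - ln (y a)).
  { apply (Rint_le_increment _ (fun u => - ln (y u)) (fun u => - (y' u / y u))); auto;
      intros x Hx.
    - assert (Hyx : 0 < y x) by (apply y_pos; lra).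
      apply (is_derive_opp (fun u => ln (y u)) x (y' x * / y x)).
      apply (is_derive_comp ln y x (/ y x) (y' x)); [now apply is_derive_ln | apply y_deriv; lra].
    - assert (Hyx : 0 < y x) by (apply y_pos; lra).
      apply (continuous_opp (fun u => y' u / y u) x).
      apply (continuous_mult y' (fun u => / y u) x); [apply y'_cont; lra |].
      apply continuous_Rinv_comp; [apply y_cont; lra | lra]. }
  apply exp_le_compat in Hint. rewrite Rminus_def, Ropp_involutive, exp_plus, exp_Ropp,
    !exp_ln in Hint by auto.
  apply Rmult_le_compat_r with (r := y b) in Hint; [| lra].
  replace (/ y b * y a * y b) with (y a) in Hint by (field; lra). exact Hint.
Qed.

(* Step (2), first half: sum_l p_l <= -y'/y, since y(tau_l t) >= y(t). *)
Lemma p_total_le_logderiv x : A2 <= x -> p_total m p x <= - (y' x / y x).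
Proof.
  intros Hx. destruct thr1 as [HB1 _]. destruct thr2 as [H12 Hd].
  assert (Hyx : 0 < y x) by (apply y_pos; lra).
  replace (- (y' x / y x)) with (sumR m (fun i => p i x * y (tau i x)) * / y x)
    by (rewrite y_eq by lra; field; lra).
  apply Rmult_le_reg_r with (y x); auto. rewrite Rmult_assoc, Rinv_l, Rmult_1_r by lra.
  unfold p_total. rewrite <- sumR_mult_r. apply sumR_le. intros i Hi.
  apply Rmult_le_compat_l; [apply p_nonneg; auto; lra |].
  apply y_nonincreasing; [apply Hd; auto; lra | apply tau_le; auto; lra].
Qed.

Lemma exp_Rint_p_total_le xi k :
  A3 <= xi -> (k < m)%nat -> exp (Rint (p_total m p) (tau k xi) xi) * y xi <= y (tau k xi).
Proof.
  intros Hxi Hk. destruct thr1 as [HB1 _]. destruct thr2 as [H12 _]. destruct thr3 as [H23 Hd].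
  assert (Ha : A2 <= tau k xi) by (apply Hd; auto).
  apply exp_Rint_logderiv_le; [lra | apply tau_le; auto; lra | |].
  - intros u Hu. apply sumR_nonneg. intros; apply p_nonneg; auto; lra.
  - intros u Hu. apply p_total_le_logderiv; lra.
Qed.

Lemma Q_weight_le_logderiv xi : A3 <= xi -> Q_weight m p tau xi <= - (y' xi / y xi).
Proof.
  intros Hxi. destruct thr1 as [HB1 _]. destruct thr2 as [H12 _]. destruct thr3 as [H23 _].
  assert (Hyx : 0 < y xi) by (apply y_pos; lra).
  replace (- (y' xi / y xi)) with (sumR m (fun i => p i xi * y (tau i xi)) * / y xi)
    by (rewrite y_eq by lra; field; lra).
  unfold Q_weight. rewrite <- sumR_mult_r. apply sumR_le. intros k Hk.
  rewrite Rmult_assoc. apply Rmult_le_compat_l; [apply p_nonneg; auto; lra |].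
  apply Rmult_le_reg_r with (y xi); auto. rewrite Rmult_assoc, Rinv_l, Rmult_1_r by lra.
  now apply exp_Rint_p_total_le.
Qed.

Lemma delayed_Q_ratio i s t :
  (i < m)%nat -> A4 <= s -> s <= t ->
  y (sigma i t) * exp (Rint (Q_weight m p tau) (tau i s) (sigma i t)) <= y (tau i s).
Proof.
  intros Hi Hs Hst. destruct thr1 as [HB1 _]. destruct thr2 as [H12 _].
  destruct thr3 as [H23 _]. destruct thr4 as [H34 Hd].
  assert (Ha : A3 <= tau i s) by (apply Hd; auto).
  assert (Hab : tau i s <= sigma i t)
    by (apply Rle_trans with (sigma i s); [apply tau_le_sigma | apply sigma_mono]; auto; lra).
  rewrite Rmult_comm. apply exp_Rint_logderiv_le; [lra | exact Hab | |].
  - intros u Hu. apply sumR_nonneg. intros k Hk.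
    apply Rmult_le_pos; [apply p_nonneg; auto; lra | left; apply exp_pos].
  - intros u Hu. apply Q_weight_le_logderiv; lra.
Qed.

Let sigma_late j t : (j < m)%nat -> A5 <= t -> A4 <= sigma j t.
Proof.
  intros Hj Ht. destruct thr1 as [HB1 _]. destruct thr2 as [H12 _].
  destruct thr3 as [H23 _]. destruct thr4 as [H34 _]. destruct thr5 as [H45 Hd].
  apply Rle_trans with (tau j t); [apply Hd; auto | apply tau_le_sigma; auto; lra].
Qed.

(* Step (4): integrating (E) over [sigma_j t, t]. *)
Lemma weighted_I_le j t :
  (j < m)%nat -> A5 <= t ->
  sumR m (fun i => y (sigma i t) * I_ij m p tau sigma i j t) <= y (sigma j t) - y t.
Proof.
  intros Hj Ht. destruct thr1 as [HB1 _]. destruct thr2 as [H12 _].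
  destruct thr3 as [H23 _]. destruct thr4 as [H34 _]. destruct thr5 as [H45 _].
  assert (Hsj : A4 <= sigma j t) by auto.
  assert (Hab : sigma j t <= t) by (apply sigma_le; auto; lra).
  enough (sumR m (fun i => y (sigma i t) * I_ij m p tau sigma i j t) <= - y t - - y (sigma j t))
    by lra.
  apply (weighted_Rint_le_increment _ _ _ (fun u => - y u) (fun u => - y' u)); auto.
  - intros x Hx. apply (is_derive_opp y x (y' x)), y_deriv; lra.
  - intros x Hx. apply (continuous_opp y' x), y'_cont; lra.
  - intros i Hi. left; apply y_pos. pose proof (sigma_late i t Hi Ht). lra.
  - intros i Hi s Hs. apply Rmult_le_pos; [apply p_nonneg; auto; lra | left; apply exp_pos].
  - intros s Hs. rewrite y_eq, Ropp_involutive by lra. apply sumR_le. intros i Hi.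
    rewrite <- Rmult_assoc, (Rmult_comm (y (sigma i t))), Rmult_assoc.
    apply Rmult_le_compat_l; [apply p_nonneg; auto; lra |].
    apply delayed_Q_ratio; auto; lra.
Qed.

Lemma root_product_eventually_small t :
  (1 <= m)%nat -> A5 <= t ->
  prodR m (fun j => rootR m (prodR m (fun i => I_ij m p tau sigma i j t))) <= / (INR m ^ m).
Proof.
  intros Hm Ht. destruct thr1 as [HB1 _]. destruct thr2 as [H12 _].
  destruct thr3 as [H23 _]. destruct thr4 as [H34 _]. destruct thr5 as [H45 _].
  apply (root_product_bound m (fun i => y (sigma i t))); auto.
  - intros i Hi. apply y_pos. pose proof (sigma_late i t Hi Ht). lra.
  - intros i j Hi Hj. apply Rint_nonneg; [apply sigma_le; auto; lra |].
    intros s Hs. pose proof (sigma_late j t Hj Ht).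
    apply Rmult_le_pos; [apply p_nonneg; auto; lra | left; apply exp_pos].
  - intros j Hj. pose proof (weighted_I_le j t Hj Ht). assert (0 < y t) by (apply y_pos; lra). lra.
Qed.

End EventuallyPositiveSolution.

Lemma no_eventually_positive_solution (m : nat) (t0 : R) (p tau sigma : nat -> R -> R) :
  (1 <= m)%nat ->
  (forall i, (i < m)%nat ->
     cont_from t0 (p i) /\ cont_from t0 (tau i) /\
     (forall t, t0 <= t -> 0 <= p i t /\ 0 <= tau i t /\ tau i t <= t) /\
     tends_to_infty (tau i)) ->
  (forall i, (i < m)%nat ->
     cont_from t0 (sigma i) /\ nondecr_from t0 (sigma i) /\
     (forall t, t0 <= t -> tau i t <= sigma i t /\ sigma i t <= t)) ->
  limsup_gt (fun t => prodR m (fun j =>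
               rootR m (prodR m (fun i => I_ij m p tau sigma i j t))))
            (/ (INR m ^ m)) ->
  forall (y : R -> R) (B : R), t0 <= B -> solves_on m p tau B y ->
  ~ (forall u, B <= u -> 0 < y u).
Proof.
  intros Hm Hp Hs [d [Hd Hlim]] y B HB [y' Hy] Hpos.
  assert (Hthr := delay_threshold_exists m tau (fun i Hi => proj2 (proj2 (proj2 (Hp i Hi))))).
  destruct (Hthr B) as [A1 thr1]. destruct (Hthr A1) as [A2 thr2].
  destruct (Hthr A2) as [A3 thr3]. destruct (Hthr A3) as [A4 thr4].
  destruct (Hthr A4) as [A5 thr5].
  destruct (Hlim A5) as [t [Ht Hbig]].
  enough (prodR m (fun j => rootR m (prodR m (fun i => I_ij m p tau sigma i j t))) <= / (INR m ^ m))
    by lra.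
  refine (root_product_eventually_small m t0 B p tau sigma y y' _ _ _ _ _ HB _ _ _ Hpos
            A1 A2 A3 A4 A5 thr1 thr2 thr3 thr4 thr5 t Hm Ht).
  - intros i s Hi Hs'. apply Hp; auto.
  - intros i s Hi Hs'. apply Hp; auto.
  - intros i s Hi Hs'. apply Hs; auto.
  - intros i s Hi Hs'. apply Hs; auto.
  - intros i r s Hi Hr Hrs. apply Hs; auto.
  - intros u Hu. apply Hy; auto.
  - intros u Hu. apply Hy; auto.
  - intros u Hu. destruct (Hy u Hu) as [_ [_ He]]. lra.
Qed.

Theorem theorem3p1 (m : nat) (t0 : R) (p tau sigma : nat -> R -> R) :
  (1 <= m)%nat ->
  (forall i, (i < m)%nat ->
     cont_from t0 (p i) /\ cont_from t0 (tau i) /\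
     (forall t, t0 <= t -> 0 <= p i t /\ 0 <= tau i t /\ tau i t <= t) /\
     tends_to_infty (tau i)) ->
  (forall i, (i < m)%nat ->
     cont_from t0 (sigma i) /\ nondecr_from t0 (sigma i) /\
     (forall t, t0 <= t -> tau i t <= sigma i t /\ sigma i t <= t)) ->
  limsup_gt (fun t => prodR m (fun j =>
               rootR m (prodR m (fun i => I_ij m p tau sigma i j t))))
            (/ (INR m ^ m)) ->
  forall x : R -> R, is_solution t0 m p tau x -> oscillatory x.
Proof.
  intros Hm Hp Hs Hl x Hsol T.
  assert (Htau0 : tau O t0 <= t0) by (apply Hp; [lia | lra]).
  destruct (solution_solves_on t0 m p tau x Htau0 Hsol) as [B [HB HxB]].
  apply NNPP. intros Hno.
  set (c := Rmax T B).
  assert (Hxc : solves_on m p tau c x) by (apply solves_on_later with B; auto; apply Rmax_r).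
  assert (Hzero_free : forall t, c <= t -> x t <> 0).
  { intros t Ht Hx0. apply Hno. exists t. split; auto. apply Rle_trans with c; auto. apply Rmax_l. }
  assert (Hc : t0 <= c) by (apply Rle_trans with B; auto; apply Rmax_r).
  destruct (sign_dichotomy x c (solves_on_continuity_pt m p tau c x Hxc) Hzero_free)
    as [Hpos | Hneg].
  - exact (no_eventually_positive_solution m t0 p tau sigma Hm Hp Hs Hl x c Hc Hxc Hpos).
  - apply (no_eventually_positive_solution m t0 p tau sigma Hm Hp Hs Hl (fun u => - x u) c Hc).
    + now apply solves_on_opp.
    + intros u Hu. pose proof (Hneg u Hu). lra.
Qed.
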